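(* Let $C\in\mathbb{N}$, $\mathbf{c}\in\mathbb{R}^C$, $\mathbf{n}\in\mathbb{N}^C$, $\boldsymbol{\mu}\in\mathbb{R}^C$, and let $$\mathrm{sb}(\theta;\mathbf{c},\mathbf{n},\boldsymbol{\mu})=\frac{1}{B}\sum_{i=1}^C c_i\cos(n_i(\theta-\mu_i))+\frac{A}{B},\quad A=\sum_{i=1}^C|c_i|,\quad B=2\pi\Big(\sum_{i=1}^C|c_i|+\sum_{i:n_i=0}c_i\Big),$$ be the spectrally bounded probability density on angles $\theta\in[-\pi,\pi)$ (identified with the unit circle $\mathbb{S}^1$ with geodesic distance). Consider a unit circle geometric graph with $N$ nodes sampled i.i.d. according to this angular density and constant neighborhood radius $\alpha$ (two nodes adjacent iff their geodesic distance is at most $\alpha$). Then the expected degree of a node at angle $\theta$ (i.e. $N$ times the probability under this density of the geodesic ball of radius $\alpha$ about $\theta$) is $$\deg(\theta)=\frac{2N}{B}\Big(\sum_{i:n_i\ne0}\frac{c_i}{n_i}\cos(n_i(\theta-\mu_i))\sin(n_i\alpha)+\Big(\sum_{i:n_i=0}c_i+A\Big)\alpha\Big),$$ and the expected average degree of the graph (the expectation of $\deg(\theta)$ for $\theta$ distributed with density $\mathrm{sb}$) is $$\mathbb{E}[\deg(\theta)]=\frac{2\pi N\alpha}{B^2}\Big(\sum_{i:n_i\ne0}\ \sum_{j:n_j=n_i}c_ic_j\cos(n_i(\mu_i-\mu_j))\frac{\sin(n_i\alpha)}{n_i\alpha}+2\Big(\sum_{i:n_i=0}c_i+A\Big)^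2\Big).$$
   Context: Here $\mathbb{N}$ includes $0$ (the indices with $n_i=0$ contribute constant terms). The function $\mathrm{sb}$ is a continuous, $2\pi$-periodic probability density. *)

From Stdlib Require Import Reals Lra List.
From Coquelicot Require Import Coquelicot.
Open Scope R_scope.

(* finite sum over indices i = 0 .. C-1 (the paper's i = 1 .. C) *)
Definition sumC (C : nat) (f : nat -> R) : R :=
  fold_right Rplus 0 (map f (seq 0 C)).

Definition sbA (C : nat) (c : nat -> R) : R := sumC C (fun i => Rabs (c i)).

Definition sbS0 (C : nat) (c : nat -> R) (n : nat -> nat) : R :=
  sumC C (fun i => if Nat.eqb (n i) 0 then c i else 0).

Definition sbB (C : nat) (c : nat -> R) (n : nat -> nat) : R :=
  2 * PI * (sbA C c + sbS0 C c n).

Definition sb (C : nat) (c : nat -> R) (n : nat -> nat) (mu : nat -> R)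
  (theta : R) : R :=
  / sbB C c n * sumC C (fun i => c i * cos (INR (n i) * (theta - mu i)))
  + sbA C c / sbB C c n.

Definition circ_dist (x y : R) : R :=
  Rmin (Rabs (x - y)) (2 * PI - Rabs (x - y)).

Definition exp_deg (N : nat) (alpha : R) (C : nat) (c : nat -> R)
  (n : nat -> nat) (mu : nat -> R) (theta : R) : R :=
  INR N * RInt (fun phi => if Rle_dec (circ_dist theta phi) alpha
                           then sb C c n mu phi else 0) (- PI) PI.

Definition exp_avg_deg (N : nat) (alpha : R) (C : nat) (c : nat -> R)
  (n : nat -> nat) (mu : nat -> R) : R :=
  RInt (fun theta => exp_deg N alpha C c n mu theta * sb C c n mu theta)
       (- PI) PI.

From Stdlib Require Import Reals List Lra Lia ZArith.
From Coquelicot Require Import Coquelicot.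
Open Scope R_scope.

(* The density sb has an explicit primitive sb_prim, assembled from the primitives
   cos_prim of its Fourier modes. It is not periodic, but it increases by the same amount
   over every period, so the sb-mass of the geodesic ball about theta (an interval of
   [-pi, pi], or two end pieces when the ball wraps around) is always
   sb_prim (theta + alpha) - sb_prim (theta - alpha); expanding gives deg(theta).
   Up to constant factors, deg and sb are both a trigonometric polynomial without
   constant term plus a constant. Integrating their product over a period, the cross
   terms vanish, and among products of modes only those of equal frequency survive. *)

Lemma sumC_ext C f g : (forall i, f i = g i) -> sumC C f = sumC C g.
Proof. intro E; unfold sumC; induction (seq 0 C); simpl; rewrite ?E; lra. Qed.

Lemma sumC_0 C : sumC C (fun _ => 0) = 0.
Proof. unfold sumC; induction (seq 0 C); simpl; lra. Qed.

Lemma sumC_plus C f g : sumC C (fun i => f i + g i) = sumC C f + sumC C g.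
Proof. unfold sumC; induction (seq 0 C); simpl; lra. Qed.

Lemma sumC_minus C f g : sumC C (fun i => f i - g i) = sumC C f - sumC C g.
Proof. unfold sumC; induction (seq 0 C); simpl; lra. Qed.

Lemma sumC_mult_l C a f : sumC C (fun i => a * f i) = a * sumC C f.
Proof. unfold sumC; induction (seq 0 C); simpl; lra. Qed.

Lemma sumC_mult_sumC C f g :
  sumC C f * sumC C g = sumC C (fun i => sumC C (fun j => f i * g j)).
Proof.
  rewrite Rmult_comm, <- sumC_mult_l; apply sumC_ext; intro i.
  rewrite Rmult_comm, <- sumC_mult_l; reflexivity.
Qed.

Lemma is_RInt_congr (f g : R -> R) (a b l l' : R) :
  is_RInt f a b l -> (forall x, Rmin a b < x < Rmax a b -> f x = g x) -> l = l' ->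
  is_RInt g a b l'.
Proof. intros H E <-; exact (is_RInt_ext f g a b l E H). Qed.

Lemma is_RInt_sumC C (f : nat -> R -> R) (v : nat -> R) a b :
  (forall i, is_RInt (f i) a b (v i)) ->
  is_RInt (fun x => sumC C (fun i => f i x)) a b (sumC C v).
Proof.
  intro H; unfold sumC; induction (seq 0 C) as [|i l IH]; simpl.
  - eapply is_RInt_congr; [apply (is_RInt_const a b 0)|now intros|].
    exact (Rmult_0_r (b - a)).
  - exact (is_RInt_plus _ _ _ _ _ _ (H i) IH).
Qed.

Definition cos_prim (k : nat) (u : R) : R :=
  if Nat.eqb k 0 then u else sin (INR k * u) / INR k.

Lemma is_RInt_cos_mode k m a b :
  is_RInt (fun x => cos (INR k * (x - m))) a b
    (cos_prim k (b - m) - cos_prim k (a - m)).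
Proof.
  unfold cos_prim; destruct (Nat.eqb_spec k 0) as [->|Hk].
  - eapply is_RInt_congr; [apply (is_RInt_const a b 1)| |].
    + intros x _; simpl; rewrite Rmult_0_l, cos_0; reflexivity.
    + change (scal (b - a) 1) with ((b - a) * 1); ring.
  - assert (INR k <> 0) by now apply not_0_INR.
    apply (is_RInt_derive (fun x => sin (INR k * (x - m)) / INR k)).
    + intros x _; auto_derive; [easy|unfold Rminus; field; easy].
    + intros x _; apply (ex_derive_continuous (fun x => cos (INR k * (x - m)))).
      auto_derive; easy.
Qed.

Lemma cos_prim_shift_2PI k u :
  cos_prim k (u + 2 * PI) = cos_prim k u + (if Nat.eqb k 0 then 2 * PI else 0).
Proof.
  unfold cos_prim; destruct (Nat.eqb k 0); [reflexivity|].
  replace (INR k * (u + 2 * PI)) with (INR k * u + 2 * INR k * PI) by ring.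
  rewrite sin_period; ring.
Qed.

Lemma cos_prim_add_sub k t a m :
  cos_prim k (t + a - m)
  = cos_prim k (t - a - m)
    + 2 * (if Nat.eqb k 0 then a else cos (INR k * (t - m)) * sin (INR k * a) / INR k).
Proof.
  unfold cos_prim; destruct (Nat.eqb_spec k 0) as [_|Hk]; [ring|].
  assert (INR k <> 0) by now apply not_0_INR.
  replace (INR k * (t + a - m)) with (INR k * (t - m) + INR k * a) by ring.
  replace (INR k * (t - a - m)) with (INR k * (t - m) - INR k * a) by ring.
  rewrite sin_plus, sin_minus; field; easy.
Qed.

Lemma is_RInt_cos_mode_period k m :
  k <> 0%nat -> is_RInt (fun x => cos (INR k * (x - m))) (-PI) PI 0.
Proof.
  intro Hk; eapply is_RInt_congr; [apply is_RInt_cos_mode|now intros|].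
  replace (PI - m) with (-PI - m + 2 * PI) by ring.
  rewrite cos_prim_shift_2PI; apply Nat.eqb_neq in Hk; rewrite Hk; ring.
Qed.

Lemma is_RInt_cos_int_mode (k : Z) d :
  is_RInt (fun x => cos (IZR k * x + d)) (-PI) PI
    (if Z.eqb k 0 then 2 * PI * cos d else 0).
Proof.
  destruct (Z.eqb_spec k 0) as [->|Hk].
  - eapply is_RInt_congr; [apply (is_RInt_const (-PI) PI (cos d))| |].
    + intros x _; simpl; rewrite Rmult_0_l, Rplus_0_l; reflexivity.
    + change (scal (PI - - PI) (cos d)) with ((PI - - PI) * cos d); ring.
  - assert (IZR k <> 0) by now apply not_0_IZR.
    assert (Hsin : sin (IZR k * PI) = 0) by (apply sin_eq_0_1; exists k; ring).
    eapply is_RInt_congr.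
    { apply (is_RInt_derive (fun x => sin (IZR k * x + d) / IZR k)
               (fun x => cos (IZR k * x + d))).
      - intros x _; auto_derive; [easy|field; easy].
      - intros x _; apply (ex_derive_continuous (fun x => cos (IZR k * x + d))).
        auto_derive; easy. }
    { now intros. }
    change (minus ?x ?y) with (x - y).
    replace (IZR k * - PI + d) with (d - IZR k * PI) by ring.
    rewrite sin_plus, sin_minus, Hsin; field; easy.
Qed.

Lemma is_RInt_cos_mode_mul k l a b :
  k <> 0%nat ->
  is_RInt (fun x => cos (INR k * (x - a)) * cos (INR l * (x - b))) (-PI) PI
    (if Nat.eqb l k then PI * cos (INR k * (a - b)) else 0).
Proof.
  intro Hk.
  (* Product to sum: cos u cos v = (cos (u - v) + cos (u + v)) / 2, at frequencies k - l, k + l. *)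
  set (kd := (Z.of_nat k - Z.of_nat l)%Z); set (ks := (Z.of_nat k + Z.of_nat l)%Z).
  set (dd := INR l * b - INR k * a); set (ds := - (INR k * a) - INR l * b).
  assert (Ekd : IZR kd = INR k - INR l) by (unfold kd; rewrite minus_IZR, <- !INR_IZR_INZ; ring).
  assert (Eks : IZR ks = INR k + INR l) by (unfold ks; rewrite plus_IZR, <- !INR_IZR_INZ; ring).
  eapply is_RInt_congr.
  { apply (is_RInt_scal _ _ _ (/ 2) _
             (is_RInt_plus _ _ _ _ _ _ (is_RInt_cos_int_mode kd dd)
                                       (is_RInt_cos_int_mode ks ds))). }
  { intros x _; change (scal ?u ?v) with (u * v); change (plus ?u ?v) with (u + v).
    rewrite Ekd, Eks.
    replace ((INR k - INR l) * x + dd) with (INR k * (x - a) - INR l * (x - b))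
      by (unfold dd; ring).
    replace ((INR k + INR l) * x + ds) with (INR k * (x - a) + INR l * (x - b))
      by (unfold ds; ring).
    rewrite cos_minus, cos_plus; field. }
  change (scal ?u ?v) with (u * v); change (plus ?u ?v) with (u + v).
  replace (Z.eqb ks 0) with false by (symmetry; apply Z.eqb_neq; unfold ks; lia).
  destruct (Nat.eqb_spec l k) as [->|Hlk].
  - replace (Z.eqb kd 0) with true by (symmetry; apply Z.eqb_eq; unfold kd; lia).
    unfold dd; rewrite <- cos_neg; replace (- (INR k * b - INR k * a)) with (INR k * (a - b))
      by ring; field.
  - replace (Z.eqb kd 0) with false by (symmetry; apply Z.eqb_neq; unfold kd; lia).
    ring.
Qed.

Definition sb_prim (C : nat) (c : nat -> R) (n : nat -> nat) (mu : nat -> R) (x : R) : R :=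
  / sbB C c n * sumC C (fun i => c i * cos_prim (n i) (x - mu i)) + sbA C c / sbB C c n * x.

Lemma is_RInt_sb C c n mu a b :
  is_RInt (sb C c n mu) a b (sb_prim C c n mu b - sb_prim C c n mu a).
Proof.
  eapply is_RInt_congr.
  { apply (is_RInt_plus _ _ _ _ _ _
      (is_RInt_scal _ _ _ (/ sbB C c n) _
         (is_RInt_sumC C (fun i x => c i * cos (INR (n i) * (x - mu i))) _ a b
            (fun i => is_RInt_scal _ _ _ (c i) _ (is_RInt_cos_mode (n i) (mu i) a b))))
      (is_RInt_const a b (sbA C c / sbB C c n))). }
  { now intros. }
  change (scal ?u ?v) with (u * v); change (plus ?u ?v) with (u + v).
  unfold sb_prim.
  rewrite (sumC_ext C _ (fun i => c i * cos_prim (n i) (b - mu i) - c i * cos_prim (n i) (a - mu i)))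
    by (intro i; apply Rmult_minus_distr_l).
  rewrite sumC_minus; ring.
Qed.

Lemma sb_prim_shift_2PI C c n mu u :
  sb_prim C c n mu (u + 2 * PI) - sb_prim C c n mu u
  = / sbB C c n * sumC C (fun i => c i * (if Nat.eqb (n i) 0 then 2 * PI else 0))
    + sbA C c / sbB C c n * (2 * PI).
Proof.
  unfold sb_prim.
  rewrite (sumC_ext C (fun i => c i * cos_prim (n i) (u + 2 * PI - mu i))
             (fun i => c i * cos_prim (n i) (u - mu i)
                       + c i * (if Nat.eqb (n i) 0 then 2 * PI else 0))).
  - rewrite sumC_plus; ring.
  - intro i; replace (u + 2 * PI - mu i) with (u - mu i + 2 * PI) by ring.
    rewrite cos_prim_shift_2PI; ring.
Qed.

Lemma sb_prim_quasi_periodic C c n mu u :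
  sb_prim C c n mu (u + 2 * PI) - sb_prim C c n mu u
  = sb_prim C c n mu PI - sb_prim C c n mu (- PI).
Proof.
  rewrite sb_prim_shift_2PI, <- (sb_prim_shift_2PI C c n mu (- PI)).
  now replace (- PI + 2 * PI) with PI by ring.
Qed.

Lemma sb_prim_sym_diff C c n mu theta alpha :
  sb_prim C c n mu (theta + alpha) - sb_prim C c n mu (theta - alpha)
  = 2 / sbB C c n *
      (sumC C (fun i => if Nat.eqb (n i) 0 then 0 else
                 c i / INR (n i) * cos (INR (n i) * (theta - mu i))
                 * sin (INR (n i) * alpha))
       + (sbS0 C c n + sbA C c) * alpha).
Proof.
  unfold sb_prim, sbS0.
  rewrite (sumC_ext C (fun i => c i * cos_prim (n i) (theta + alpha - mu i))
             (fun i => c i * cos_prim (n i) (theta - alpha - mu i)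
                       + 2 * ((if Nat.eqb (n i) 0 then 0 else
                                 c i / INR (n i) * cos (INR (n i) * (theta - mu i))
                                 * sin (INR (n i) * alpha))
                              + (if Nat.eqb (n i) 0 then c i else 0) * alpha))).
  - rewrite sumC_plus, sumC_mult_l, sumC_plus.
    rewrite (sumC_ext C (fun i => (if Nat.eqb (n i) 0 then c i else 0) * alpha)
               (fun i => alpha * (if Nat.eqb (n i) 0 then c i else 0))) by (intro; ring).
    rewrite sumC_mult_l; unfold Rdiv; ring.
  - intro i; rewrite cos_prim_add_sub; destruct (Nat.eqb (n i) 0); unfold Rdiv; ring.
Qed.

Section CircleBall.

Variables (f F : R -> R) (theta alpha : R).
Hypothesis F_prim : forall a b, is_RInt f a b (F b - F a).
Hypothesis F_quasi_periodic : forall u, F (u + 2 * PI) - F u = F PI - F (- PI).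

Let ball_f (phi : R) : R := if Rle_dec (circ_dist theta phi) alpha then f phi else 0.

Lemma is_RInt_ball_inside a b :
  a <= b -> (forall phi, a < phi < b -> circ_dist theta phi <= alpha) ->
  is_RInt ball_f a b (F b - F a).
Proof.
  intros Hab Hin; apply is_RInt_ext with f; [|apply F_prim].
  intros x Hx; rewrite Rmin_left, Rmax_right in Hx by lra; unfold ball_f.
  destruct (Rle_dec _ _) as [_|Hout]; [reflexivity|now elim Hout; apply Hin].
Qed.

Lemma is_RInt_ball_outside a b :
  a <= b -> (forall phi, a < phi < b -> ~ circ_dist theta phi <= alpha) ->
  is_RInt ball_f a b 0.
Proof.
  intros Hab Hout; eapply is_RInt_congr; [apply (is_RInt_const a b 0)| |].
  - intros x Hx; rewrite Rmin_left, Rmax_right in Hx by lra; unfold ball_f.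
    destruct (Rle_dec _ _) as [Hin|_]; [now elim (Hout x Hx)|reflexivity].
  - exact (Rmult_0_r (b - a)).
Qed.

Ltac circ_dist_lra :=
  intros; unfold circ_dist, Rmin; try intro; destruct (Rle_dec _ _); split_Rabs; lra.

Lemma is_RInt_circ_ball :
  - PI <= theta <= PI -> 0 < alpha <= PI ->
  is_RInt ball_f (- PI) PI (F (theta + alpha) - F (theta - alpha)).
Proof.
  intros Htheta Halpha; pose proof PI_RGT_0.
  destruct (Rle_dec (- PI) (theta - alpha)) as [Hlo|Hlo];
    [destruct (Rle_dec (theta + alpha) PI) as [Hhi|Hhi]|].
  - eapply is_RInt_congr.
    { eapply is_RInt_Chasles; [eapply is_RInt_Chasles|].
      - apply (is_RInt_ball_outside (- PI) (theta - alpha)); [lra|circ_dist_lra].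
      - apply (is_RInt_ball_inside (theta - alpha) (theta + alpha)); [lra|circ_dist_lra].
      - apply (is_RInt_ball_outside (theta + alpha) PI); [lra|circ_dist_lra]. }
    { now intros. }
    repeat change (plus ?u ?v) with (u + v); ring.
  - eapply is_RInt_congr.
    { eapply is_RInt_Chasles; [eapply is_RInt_Chasles|].
      - apply (is_RInt_ball_inside (- PI) (theta + alpha - 2 * PI)); [lra|circ_dist_lra].
      - apply (is_RInt_ball_outside (theta + alpha - 2 * PI) (theta - alpha)); [lra|circ_dist_lra].
      - apply (is_RInt_ball_inside (theta - alpha) PI); [lra|circ_dist_lra]. }
    { now intros. }
    repeat change (plus ?u ?v) with (u + v).
    pose proof (F_quasi_periodic (theta + alpha - 2 * PI)) as Hper.
    replace (theta + alpha - 2 * PI + 2 * PI) with (theta + alpha) in Hper by ring.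
    lra.
  - eapply is_RInt_congr.
    { eapply is_RInt_Chasles; [eapply is_RInt_Chasles|].
      - apply (is_RInt_ball_inside (- PI) (theta + alpha)); [lra|circ_dist_lra].
      - apply (is_RInt_ball_outside (theta + alpha) (theta - alpha + 2 * PI)); [lra|circ_dist_lra].
      - apply (is_RInt_ball_inside (theta - alpha + 2 * PI) PI); [lra|circ_dist_lra]. }
    { now intros. }
    repeat change (plus ?u ?v) with (u + v).
    pose proof (F_quasi_periodic (theta - alpha)).
    lra.
Qed.

End CircleBall.

Lemma exp_deg_formula C c n mu N alpha theta :
  0 < alpha <= PI -> - PI <= theta <= PI ->
  exp_deg N alpha C c n mu theta =
  2 * INR N / sbB C c n *
    (sumC C (fun i => if Nat.eqb (n i) 0 then 0 else
               c i / INR (n i) * cos (INR (n i) * (theta - mu i))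
               * sin (INR (n i) * alpha))
     + (sbS0 C c n + sbA C c) * alpha).
Proof.
  intros Halpha Htheta; unfold exp_deg.
  replace (RInt _ (- PI) PI)
    with (sb_prim C c n mu (theta + alpha) - sb_prim C c n mu (theta - alpha)).
  - rewrite sb_prim_sym_diff; unfold Rdiv; ring.
  - symmetry; apply is_RInt_unique.
    exact (is_RInt_circ_ball _ _ theta alpha (is_RInt_sb C c n mu)
             (sb_prim_quasi_periodic C c n mu) Htheta Halpha).
Qed.

Definition trig_poly (C : nat) (a : nat -> R) (n : nat -> nat) (mu : nat -> R) (x : R) : R :=
  sumC C (fun i => a i * cos (INR (n i) * (x - mu i))).

Definition drop_const_modes (n : nat -> nat) (a : nat -> R) (i : nat) : R :=
  if Nat.eqb (n i) 0 then 0 else a i.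

Lemma is_RInt_trig_poly_mean0 C a n mu :
  is_RInt (trig_poly C (drop_const_modes n a) n mu) (- PI) PI 0.
Proof.
  rewrite <- (sumC_0 C); apply (is_RInt_sumC C (fun i x => _ * cos (INR (n i) * (x - mu i)))).
  intro i; unfold drop_const_modes; destruct (Nat.eqb_spec (n i) 0) as [_|Hni].
  - eapply is_RInt_congr; [apply (is_RInt_const (- PI) PI 0)| |].
    + intros x _; cbv beta; ring.
    + exact (Rmult_0_r _).
  - eapply is_RInt_congr;
      [apply (is_RInt_scal _ _ _ (a i) _ (is_RInt_cos_mode_period (n i) (mu i) Hni))|now intros|].
    exact (Rmult_0_r _).
Qed.

Lemma is_RInt_trig_poly_mul C a b n mu :
  is_RInt (fun x => trig_poly C (drop_const_modes n a) n mu x * trig_poly C b n mu x) (- PI) PI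
    (PI * sumC C (fun i => sumC C (fun j =>
       drop_const_modes n a i * b j
       * (if Nat.eqb (n j) (n i) then cos (INR (n i) * (mu i - mu j)) else 0)))).
Proof.
  set (a' := drop_const_modes n a).
  apply (is_RInt_congr (fun x => sumC C (fun i => sumC C (fun j =>
           (a' i * cos (INR (n i) * (x - mu i))) * (b j * cos (INR (n j) * (x - mu j))))))
           _ _ _
           (sumC C (fun i => sumC C (fun j =>
              PI * (a' i * b j * (if Nat.eqb (n j) (n i) then cos (INR (n i) * (mu i - mu j))
                                  else 0)))))).
  - apply (is_RInt_sumC C (fun i x => sumC C (fun j => _))); intro i.
    apply (is_RInt_sumC C (fun j x => _)); intro j.
    unfold a', drop_const_modes; destruct (Nat.eqb_spec (n i) 0) as [_|Hni].
    + eapply is_RInt_congr; [apply (is_RInt_const (- PI) PI 0)| |].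
      * intros x _; cbv beta; ring.
      * change (scal ?u ?v) with (u * v); ring.
    + eapply is_RInt_congr;
        [apply (is_RInt_scal _ _ _ (a i * b j) _
                  (is_RInt_cos_mode_mul (n i) (n j) (mu i) (mu j) Hni))| |].
      * intros x _; change (scal ?u ?v) with (u * v); cbv beta; ring.
      * change (scal ?u ?v) with (u * v); destruct (Nat.eqb (n j) (n i)); ring.
  - intros x _; unfold trig_poly; symmetry; apply sumC_mult_sumC.
  - rewrite <- sumC_mult_l; apply sumC_ext; intro i.
    rewrite <- sumC_mult_l; reflexivity.
Qed.

Lemma is_RInt_shifted_mul (P Q : R -> R) (a b s u v : R) :
  is_RInt P a b 0 -> is_RInt Q a b 0 -> is_RInt (fun x => P x * Q x) a b s ->
  is_RInt (fun x => (P x + u) * (Q x + v)) a b (s + (b - a) * (u * v)).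
Proof.
  intros HP HQ HPQ; eapply is_RInt_congr.
  { apply (is_RInt_plus _ _ _ _ _ _
             (is_RInt_plus _ _ _ _ _ _
                (is_RInt_plus _ _ _ _ _ _ HPQ (is_RInt_scal _ _ _ v _ HP))
                (is_RInt_scal _ _ _ u _ HQ))
             (is_RInt_const a b (u * v))). }
  - intros x _; repeat change (plus ?y ?z) with (y + z); repeat change (scal ?y ?z) with (y * z).
    cbv beta; ring.
  - repeat change (plus ?y ?z) with (y + z); repeat change (scal ?y ?z) with (y * z).
    ring.
Qed.

Lemma sb_trig_poly C c n mu x :
  sb C c n mu x
  = / sbB C c n * (trig_poly C (drop_const_modes n c) n mu x + (sbS0 C c n + sbA C c)).
Proof.
  unfold sb, trig_poly, sbS0.
  rewrite (sumC_ext C (fun i => c i * cos (INR (n i) * (x - mu i)))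
             (fun i => drop_const_modes n c i * cos (INR (n i) * (x - mu i))
                       + (if Nat.eqb (n i) 0 then c i else 0))).
  - rewrite sumC_plus; unfold Rdiv; ring.
  - intro i; unfold drop_const_modes; destruct (Nat.eqb_spec (n i) 0) as [->|_]; [|ring].
    rewrite Rmult_0_l, cos_0; ring.
Qed.

Lemma exp_deg_trig_poly C c n mu N alpha theta :
  0 < alpha <= PI -> - PI <= theta <= PI ->
  exp_deg N alpha C c n mu theta =
  2 * INR N / sbB C c n *
    (trig_poly C (drop_const_modes n (fun i => c i / INR (n i) * sin (INR (n i) * alpha))) n mu theta
     + (sbS0 C c n + sbA C c) * alpha).
Proof.
  intros Halpha Htheta; rewrite exp_deg_formula by easy.
  do 3 f_equal; apply sumC_ext; intro i.
  unfold drop_const_modes; destruct (Nat.eqb (n i) 0); ring.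
Qed.

Lemma matched_modes_sum C c n mu alpha :
  alpha <> 0 ->
  sumC C (fun i => sumC C (fun j =>
    drop_const_modes n (fun i => c i / INR (n i) * sin (INR (n i) * alpha)) i
    * drop_const_modes n c j
    * (if Nat.eqb (n j) (n i) then cos (INR (n i) * (mu i - mu j)) else 0)))
  = alpha * sumC C (fun i => if Nat.eqb (n i) 0 then 0 else
      sumC C (fun j => if Nat.eqb (n j) (n i) then
        c i * c j * cos (INR (n i) * (mu i - mu j))
        * (sin (INR (n i) * alpha) / (INR (n i) * alpha))
      else 0)).
Proof.
  intro Halpha; rewrite <- sumC_mult_l; apply sumC_ext; intro i.
  unfold drop_const_modes; destruct (Nat.eqb_spec (n i) 0) as [_|Hni].
  - rewrite Rmult_0_r, <- (sumC_0 C) at 1; apply sumC_ext; intro j; ring.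
  - assert (INR (n i) <> 0) by now apply not_0_INR.
    rewrite <- sumC_mult_l; apply sumC_ext; intro j.
    destruct (Nat.eqb_spec (n j) (n i)) as [->|_]; [|ring].
    apply Nat.eqb_neq in Hni; rewrite Hni; field; auto.
Qed.

Lemma exp_avg_deg_formula C c n mu N alpha :
  0 < sbB C c n -> 0 < alpha <= PI ->
  exp_avg_deg N alpha C c n mu =
    2 * PI * INR N * alpha / (sbB C c n) ^ 2 *
      (sumC C (fun i => if Nat.eqb (n i) 0 then 0 else
          sumC C (fun j => if Nat.eqb (n j) (n i) then
              c i * c j * cos (INR (n i) * (mu i - mu j))
              * (sin (INR (n i) * alpha) / (INR (n i) * alpha))
            else 0))
       + 2 * (sbS0 C c n + sbA C c) ^ 2).
Proof.
  intros HB Halpha; unfold exp_avg_deg.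
  set (p := fun i => c i / INR (n i) * sin (INR (n i) * alpha)).
  set (K := sbS0 C c n + sbA C c).
  set (P := trig_poly C (drop_const_modes n p) n mu).
  set (Q := trig_poly C (drop_const_modes n c) n mu).
  pose proof (is_RInt_scal _ _ _ (2 * INR N / sbB C c n * / sbB C c n) _
     (is_RInt_shifted_mul P Q _ _ _ (K * alpha) K
        (is_RInt_trig_poly_mean0 C p n mu) (is_RInt_trig_poly_mean0 C c n mu)
        (is_RInt_trig_poly_mul C p (drop_const_modes n c) n mu))) as Hint.
  replace (RInt _ (- PI) PI) with
    (2 * INR N / sbB C c n * / sbB C c n
     * (PI * (alpha * sumC C (fun i => if Nat.eqb (n i) 0 then 0 else
          sumC C (fun j => if Nat.eqb (n j) (n i) then
              c i * c j * cos (INR (n i) * (mu i - mu j))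
              * (sin (INR (n i) * alpha) / (INR (n i) * alpha))
            else 0)))
        + (PI - - PI) * (K * alpha * K))).
  - unfold K; field; lra.
  - symmetry; apply is_RInt_unique.
    eapply is_RInt_congr; [exact Hint| |].
    + intros theta Htheta; rewrite Rmin_left, Rmax_right in Htheta by lra.
      change (scal ?u ?v) with (u * v); cbv beta.
      rewrite exp_deg_trig_poly, sb_trig_poly by lra.
      unfold P, Q, K, p; field; lra.
    + change (scal ?u ?v) with (u * v); unfold p; rewrite matched_modes_sum by lra; reflexivity.
Qed.

Theorem proposition3 (C : nat) (c : nat -> R) (n : nat -> nat) (mu : nat -> R)
  (N : nat) (alpha : R) :
  0 < sbB C c n ->
  0 < alpha <= PI ->
  (forall theta, - PI <= theta < PI ->
     exp_deg N alpha C c n mu theta =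
     2 * INR N / sbB C c n *
       (sumC C (fun i => if Nat.eqb (n i) 0 then 0 else
                  c i / INR (n i) * cos (INR (n i) * (theta - mu i))
                  * sin (INR (n i) * alpha))
        + (sbS0 C c n + sbA C c) * alpha)) /\
  exp_avg_deg N alpha C c n mu =
    2 * PI * INR N * alpha / (sbB C c n) ^ 2 *
      (sumC C (fun i => if Nat.eqb (n i) 0 then 0 else
          sumC C (fun j => if Nat.eqb (n j) (n i) then
              c i * c j * cos (INR (n i) * (mu i - mu j))
              * (sin (INR (n i) * alpha) / (INR (n i) * alpha))
            else 0))
       + 2 * (sbS0 C c n + sbA C c) ^ 2).
Proof.
  intros HB Halpha; split.
  - intros theta Htheta; apply exp_deg_formula; lra.
  - exact (exp_avg_deg_formula C c n mu N alpha HB Halpha).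
Qed.
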